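(* Let $R_0^*\in SO(3)$ and $x_1,\dots,x_\ell\in\mathbb{R}^3$. Then $$\lambda_{\min2}\Big(\sum_{i=1}^\ell P_i\Big)=\sum_{i=1}^\ell4\|x_i\|_2^2-\lambda_{\max}\Big(\sum_{i=1}^\ell4x_ix_i^\top\Big).$$
   Context: For $w=[w_1;w_2;w_3;w_4]\in\mathbb{S}^3$, $R(w)=\begin{bmatrix} w_1^2+w_2^2-w_3^2-w_4^2 & 2(w_2w_3-w_1w_4) & 2(w_2w_4+w_1w_3)\\ 2(w_2w_3+w_1w_4) & w_1^2+w_3^2-w_2^2-w_4^2 & 2(w_3w_4-w_1w_2)\\ 2(w_2w_4-w_1w_3) & 2(w_3w_4+w_1w_2) & w_1^2+w_4^2-w_2^2-w_3^2\end{bmatrix}\in SO(3)$. $P_i$ is the unique symmetric $4\times4$ matrix with $w^\top P_iw=\|R_0^*x_i-R(w)x_i\|_2^2$ for all $w\in\mathbb{S}^3$. $\lambda_{\min2}$ is the second smallest eigenvalue (counting multiplicity), $\lambda_{\max}$ the largest. *)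

From HB Require Import structures.
From mathcomp Require Import all_boot all_order all_algebra.
From mathcomp Require Import boolp reals.
Set Implicit Arguments. Unset Strict Implicit. Unset Printing Implicit Defensive.
Import Order.TTheory GRing.Theory Num.Theory.
Local Open Scope ring_scope.

Section Defs.
Variable R : realType.

(* The quaternion-parametrized rotation matrix R(w), w = [w1;w2;w3;w4]. *)
Definition quatR (w : 'cV[R]_4) : 'M[R]_3 :=
  let w1 := w (inord 0) 0 in let w2 := w (inord 1) 0 in
  let w3 := w (inord 2) 0 in let w4 := w (inord 3) 0 in
  \matrix_(i < 3, j < 3)
    match nat_of_ord i, nat_of_ord j with
    | 0, 0 => w1^+2 + w2^+2 - w3^+2 - w4^+2
    | 0, 1 => 2 * (w2 * w3 - w1 * w4)
    | 0, _ => 2 * (w2 * w4 + w1 * w3)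
    | 1, 0 => 2 * (w2 * w3 + w1 * w4)
    | 1, 1 => w1^+2 + w3^+2 - w2^+2 - w4^+2
    | 1, _ => 2 * (w3 * w4 - w1 * w2)
    | _, 0 => 2 * (w2 * w4 - w1 * w3)
    | _, 1 => 2 * (w3 * w4 + w1 * w2)
    | _, _ => w1^+2 + w4^+2 - w2^+2 - w3^+2
    end.

Definition sqnorm n (v : 'cV[R]_n) : R := \sum_(k < n) v k 0 ^+ 2.

Definition qform n (P : 'M[R]_n) (w : 'cV[R]_n) : R := (w^T *m P *m w) 0 0.

Definition is_SO3 (Q : 'M[R]_3) : Prop := Q^T *m Q = 1%:M /\ \det Q = 1.

Definition eigseq n (A : 'M[R]_n) (s : seq R) : bool :=
  char_poly A == \prod_(a <- s) ('X - a%:P).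

(* eigenvalues of A, counted with multiplicity, in nondecreasing order
   (the characteristic polynomial splits over R for symmetric A) *)
Definition eigvals n (A : 'M[R]_n) : seq R :=
  sort <=%R (match pselect (exists s, eigseq A s) with
             | left h => xchoose h
             | right _ => [::]
             end).

Definition lambda_min2 n (A : 'M[R]_n) : R := nth 0 (eigvals A) 1.
Definition lambda_max n (A : 'M[R]_n) : R := last 0 (eigvals A).

End Defs.

From HB Require Import structures.
From mathcomp Require Import all_boot all_order all_algebra.
From mathcomp Require Import boolp reals ring lra.
From mathcomp Require Import complex sesquilinear spectral.
Import Order.TTheory GRing.Theory Num.Theory.
Local Open Scope ring_scope.
Set Implicit Arguments. Unset Strict Implicit. Unset Printing Implicit Defensive.

(* On the unit sphere, |R0 x - R(w) x|^2 = 2 |x|^2 - 2 tr((R0 x x^T)^T R(w)), and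
   tr(B^T R(w)) is the quadratic form w^T K(B) w of Davenport's symmetric 4x4
   matrix K(B).  A symmetric matrix is determined by its quadratic form on the
   sphere, so sum_i P_i = 2 tr(S) I - 2 K(R0 S) with S = sum_i x_i x_i^T.  The
   characteristic polynomial of K(B) only depends on tr(B^T B), the second
   invariant of B^T B and det B, which for B = R0 S are those of S^2 and det S.
   Hence if 0 <= a <= b <= c are the eigenvalues of S, the eigenvalues of
   sum_i P_i are 0 <= 4(a+b) <= 4(a+c) <= 4(b+c), and 4(a+b) = 4 tr S - 4c. *)

Section SmallSums.
Variable V : nmodType.

Lemma sum_ord2 (F : 'I_2 -> V) : \sum_(i < 2) F i = F (inord 0) + F (inord 1).
Proof.
by rewrite !big_ord_recl big_ord0 addr0; congr (F _ + F _); apply/val_inj; rewrite /= inordK.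
Qed.

Lemma sum_ord3 (F : 'I_3 -> V) :
  \sum_(i < 3) F i = F (inord 0) + F (inord 1) + F (inord 2).
Proof.
rewrite !big_ord_recl big_ord0 addr0 addrA.
by congr (F _ + F _ + F _); apply/val_inj; rewrite /= inordK.
Qed.

Lemma sum_ord4 (F : 'I_4 -> V) :
  \sum_(i < 4) F i = F (inord 0) + F (inord 1) + F (inord 2) + F (inord 3).
Proof.
rewrite !big_ord_recl big_ord0 addr0 !addrA.
by congr (F _ + F _ + F _ + F _); apply/val_inj; rewrite /= inordK.
Qed.

End SmallSums.

Lemma lift_inord n i j : (i <= n.+1)%N -> (j <= n)%N ->
  lift (inord i : 'I_n.+2) (inord j : 'I_n.+1) = inord (bump i j).
Proof.
move=> le_i le_j; apply/val_inj; rewrite /= !inordK //.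
by rewrite /bump; case: (i <= j)%N; rewrite ?add1n ?add0n // ltnS (leq_trans le_j).
Qed.

Lemma inord_eqE n i j : (i <= n)%N -> (j <= n)%N ->
  (inord i == inord j :> 'I_n.+1) = (i == j).
Proof. by move=> le_i le_j; rewrite -val_eqE /= !inordK. Qed.

Section SmallDeterminants.
Variable R : comNzRingType.

Definition det3 (a : nat -> nat -> R) : R :=
    a 0%N 0%N * (a 1%N 1%N * a 2%N 2%N - a 1%N 2%N * a 2%N 1%N)
  - a 0%N 1%N * (a 1%N 0%N * a 2%N 2%N - a 1%N 2%N * a 2%N 0%N)
  + a 0%N 2%N * (a 1%N 0%N * a 2%N 1%N - a 1%N 1%N * a 2%N 0%N).

Lemma det_mx33 (A : 'M[R]_3) : \det A = det3 (fun i j => A (inord i) (inord j)).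
Proof.
have ord0_inord : (0 : 'I_1) = inord 0 by apply/val_inj; rewrite /= inordK.
rewrite (expand_det_row _ (inord 0)) sum_ord3 /cofactor.
rewrite !(expand_det_row _ (inord 0)) !sum_ord2 /cofactor !det_mx11 !mxE ord0_inord.
rewrite !lift_inord //= ?lift_inord //= !inordK //= /bump /= /det3; ring.
Qed.

(* Laplace expansion along the first row; [bump k] skips column k. *)
Definition det4 (a : nat -> nat -> R) : R :=
    a 0%N 0%N * det3 (fun i j => a i.+1 (bump 0 j))
  - a 0%N 1%N * det3 (fun i j => a i.+1 (bump 1 j))
  + a 0%N 2%N * det3 (fun i j => a i.+1 (bump 2 j))
  - a 0%N 3%N * det3 (fun i j => a i.+1 (bump 3 j)).

Lemma det_mx44 (A : 'M[R]_4) : \det A = det4 (fun i j => A (inord i) (inord j)).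
Proof.
rewrite (expand_det_row _ (inord 0)) sum_ord4 /cofactor !det_mx33 /det4 /det3 !mxE.
by rewrite !lift_inord // !inordK //= /bump /=; ring.
Qed.

End SmallDeterminants.

Section Invariants3.
Variable R : comNzRingType.
Implicit Types (A : 'M[R]_3) (a b c k : R).

Definition principal_minors2 A : R :=
    A (inord 0) (inord 0) * A (inord 1) (inord 1) - A (inord 0) (inord 1) * A (inord 1) (inord 0)
  + A (inord 0) (inord 0) * A (inord 2) (inord 2) - A (inord 0) (inord 2) * A (inord 2) (inord 0)
  + A (inord 1) (inord 1) * A (inord 2) (inord 2) - A (inord 1) (inord 2) * A (inord 2) (inord 1).

Lemma char_poly3 A : char_poly A =
  'X^3 - (\tr A)%:P * 'X^2 + (principal_minors2 A)%:P * 'X - (\det A)%:P.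
Proof.
rewrite /char_poly /char_poly_mx !det_mx33 /det3 /principal_minors2 /mxtrace /= sum_ord3 !mxE.
rewrite !inord_eqE //=; ring.
Qed.

Lemma mxtrace_sqr3 A : \tr (A *m A) = \tr A ^+ 2 - 2 * principal_minors2 A.
Proof. by rewrite /principal_minors2 /mxtrace !sum_ord3 !mxE !sum_ord3; ring. Qed.

Lemma principal_minors2_sqr A :
  principal_minors2 (A *m A) = principal_minors2 A ^+ 2 - 2 * \tr A * \det A.
Proof.
by rewrite /principal_minors2 /mxtrace !det_mx33 /det3 /= !sum_ord3 !mxE !sum_ord3; ring.
Qed.

Lemma principal_minors2Z a A : principal_minors2 (a *: A) = a ^+ 2 * principal_minors2 A.
Proof. by rewrite /principal_minors2 !mxE; ring. Qed.

Lemma prod_XsubC3 a b c : \prod_(z <- [:: a; b; c]) ('X - z%:P) =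
  'X^3 - (a + b + c)%:P * 'X^2 + (a * b + a * c + b * c)%:P * 'X - (a * b * c)%:P.
Proof. by rewrite !big_cons big_nil; ring. Qed.

Lemma vieta3 A a b c : char_poly A = \prod_(z <- [:: a; b; c]) ('X - z%:P) ->
  [/\ \tr A = a + b + c, principal_minors2 A = a * b + a * c + b * c
    & \det A = a * b * c].
Proof.
rewrite char_poly3 prod_XsubC3 => E; have coefE i := congr1 (fun p : {poly R} => p`_i) E.
have := coefE 0%N; have := coefE 1%N; have := coefE 2%N.
rewrite /= !(coefB, coefD, coefCM, coefXn, coefX, coefC) /=.
by rewrite !(mulr0, mulr1, oppr0, subr0, sub0r, addr0, add0r) => /oppr_inj-> -> /oppr_inj->.
Qed.

Lemma char_poly3_scale k A a b c :
  char_poly A = \prod_(z <- [:: a; b; c]) ('X - z%:P) ->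
  char_poly (k *: A) = \prod_(z <- [:: k * a; k * b; k * c]) ('X - z%:P).
Proof.
move=> /vieta3 [trA pmA detA].
by rewrite char_poly3 prod_XsubC3 mxtraceZ principal_minors2Z detZ trA pmA detA; ring.
Qed.

End Invariants3.

Section QuadraticForms.
Variable R : realType.
Implicit Types (n : nat) (a : R).

Lemma sqnormE n (v : 'cV[R]_n) : sqnorm v = (v^T *m v) 0 0.
Proof. by rewrite /sqnorm mxE; apply: eq_bigr => k _; rewrite !mxE expr2. Qed.

Lemma sqnormZ n a (v : 'cV[R]_n) : sqnorm (a *: v) = a ^+ 2 * sqnorm v.
Proof. by rewrite /sqnorm mulr_sumr; apply: eq_bigr => k _; rewrite mxE exprMn. Qed.

Lemma sqnormB n (u v : 'cV[R]_n) :
  sqnorm (u - v) = sqnorm u - 2 * (u^T *m v) 0 0 + sqnorm v.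
Proof.
have vTu : v^T *m u = u^T *m v.
  by apply/matrixP => i j; rewrite !ord1 -{1}(trmxK u) -trmx_mul mxE.
by rewrite !sqnormE [(u - v)^T]raddfB /= mulmxBl !mulmxBr vTu !mxE; ring.
Qed.

Lemma sqnorm_orthomx n (Q : 'M[R]_n) v : Q^T *m Q = 1%:M -> sqnorm (Q *m v) = sqnorm v.
Proof. by move=> oQ; rewrite !sqnormE trmx_mul -mulmxA (mulmxA Q^T) oQ mul1mx. Qed.

Lemma mxtrace_outer n (y x : 'cV[R]_n) (M : 'M[R]_n) :
  \tr ((y *m x^T)^T *m M) = (y^T *m M *m x) 0 0.
Proof. by rewrite trmx_mul trmxK -[x *m _ *m M]mulmxA mxtrace_mulC /mxtrace big_ord1. Qed.

Lemma mxtrace_outer_sqnorm n (x : 'cV[R]_n) : \tr (x *m x^T) = sqnorm x.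
Proof. by rewrite mxtrace_mulC sqnormE /mxtrace big_ord1. Qed.

Lemma mxtrace_sum_outer l n (x : 'I_l -> 'cV[R]_n) :
  \tr (\sum_(i < l) x i *m (x i)^T) = \sum_(i < l) sqnorm (x i).
Proof. by rewrite raddf_sum; apply: eq_bigr => i _; rewrite /= mxtrace_outer_sqnorm. Qed.

Lemma qformB n (A B : 'M[R]_n) w : qform (A - B) w = qform A w - qform B w.
Proof. by rewrite /qform mulmxBr mulmxBl !mxE. Qed.

Lemma qform_sum n I (r : seq I) (F : I -> 'M[R]_n) w :
  qform (\sum_(i <- r) F i) w = \sum_(i <- r) qform (F i) w.
Proof. by rewrite /qform mulmx_sumr mulmx_suml summxE. Qed.

Lemma qform_scalar n a (w : 'cV[R]_n) : qform a%:M w = a * sqnorm w.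
Proof. by rewrite /qform mul_mx_scalar -scalemxAl mxE sqnormE. Qed.

Lemma qformZ n a (A : 'M[R]_n) w : qform (a *: A) w = a * qform A w.
Proof. by rewrite /qform -scalemxAr -scalemxAl mxE. Qed.

Lemma qformZr n a (A : 'M[R]_n) (w : 'cV[R]_n) : qform A (a *: w) = a ^+ 2 * qform A w.
Proof. by rewrite /qform [(a *: w)^T]linearZ /= -!scalemxAl -scalemxAr !mxE; ring. Qed.

Lemma qform_sphere_eq0 n (A : 'M[R]_n) :
  (forall w, sqnorm w = 1 -> qform A w = 0) -> forall w, qform A w = 0.
Proof.
move=> A0 w; have [w0|wn0] := eqVneq (sqnorm w) 0.
  suff -> : w = 0 by rewrite /qform mulmx0 mxE.
  apply/matrixP => k l; rewrite (ord1 l) !mxE; apply/eqP; rewrite -sqrf_eq0.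
  by apply/eqP/(psumr_eq0P _ w0) => // i _; exact: sqr_ge0.
have w_gt0 : 0 < sqnorm w by rewrite lt_def wn0 sumr_ge0 // => i _; exact: sqr_ge0.
pose c := (Num.sqrt (sqnorm w))^-1.
have c_neq0 : c != 0 by rewrite invr_eq0 sqrtr_eq0 -ltNge.
have /A0 : sqnorm (c *: w) = 1 by rewrite sqnormZ exprVn sqr_sqrtr ?ltW // mulVf.
by rewrite qformZr => /eqP; rewrite mulf_eq0 expf_eq0 (negPf c_neq0) andbF => /eqP.
Qed.

Lemma sym_qform_eq0 n (A : 'M[R]_n) : A^T = A -> (forall w, qform A w = 0) -> A = 0.
Proof.
move=> symA A0; apply/matrixP => i j; rewrite mxE.
pose e k : 'cV[R]_n := delta_mx k 0.
have entry k l : ((e k)^T *m A *m e l) 0 0 = A k l.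
  by rewrite trmx_delta -rowE -colE !mxE.
have polar : qform A (e i + e j) = qform A (e i) + qform A (e j)
    + ((e i)^T *m A *m e j) 0 0 + ((e j)^T *m A *m e i) 0 0.
  by rewrite /qform [(_ + _)^T]raddfD /= !(mulmxDl, mulmxDr) !mxE; ring.
have Aji : A j i = A i j by rewrite -{1}symA mxE.
by move: polar; rewrite !A0 !entry Aji; lra.
Qed.

Lemma sym_qform_sphere_inj n (A B : 'M[R]_n) : A^T = A -> B^T = B ->
  (forall w, sqnorm w = 1 -> qform A w = qform B w) -> A = B.
Proof.
move=> symA symB AB; apply/eqP; rewrite -subr_eq0; apply/eqP/sym_qform_eq0.
  by rewrite raddfB /= symA symB.
by apply: qform_sphere_eq0 => w /AB; rewrite qformB => ->; rewrite subrr.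
Qed.

End QuadraticForms.

Section Davenport.
Variable R : realType.

(* Davenport's K-matrix of the q-method, [[tr B, z^T]; [z, B + B^T - (tr B) I]]
   with z = (B21 - B12, B02 - B20, B10 - B01), indices from 0. *)
Definition davenport_entry (B : 'M[R]_3) (i j : nat) : R :=
  match i, j with
  | 0, 0 => \tr B
  | 1, 1 => 2 * B (inord 0) (inord 0) - \tr B
  | 2, 2 => 2 * B (inord 1) (inord 1) - \tr B
  | 3, 3 => 2 * B (inord 2) (inord 2) - \tr B
  | 0, 1 | 1, 0 => B (inord 2) (inord 1) - B (inord 1) (inord 2)
  | 0, 2 | 2, 0 => B (inord 0) (inord 2) - B (inord 2) (inord 0)
  | 0, 3 | 3, 0 => B (inord 1) (inord 0) - B (inord 0) (inord 1)
  | 1, 2 | 2, 1 => B (inord 0) (inord 1) + B (inord 1) (inord 0)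
  | 1, 3 | 3, 1 => B (inord 0) (inord 2) + B (inord 2) (inord 0)
  | _, _ => B (inord 1) (inord 2) + B (inord 2) (inord 1)
  end.

Definition davenport (B : 'M[R]_3) : 'M[R]_4 :=
  \matrix_(i < 4, j < 4) davenport_entry B i j.

Lemma davenport_sym B : (davenport B)^T = davenport B.
Proof.
by apply/matrixP => i j; rewrite !mxE; case: i j => [[|[|[|[|?]]]] ?] [[|[|[|[|?]]]] ?].
Qed.

Lemma qform_davenport B w : qform (davenport B) w = \tr (B^T *m quatR w).
Proof.
rewrite /qform !(sum_ord4, mxE) !inordK //= /mxtrace !(sum_ord3, mxE) !inordK //=.
ring.
Qed.

Lemma char_poly_davenport (c : R) (B : 'M[R]_3) :
  char_poly (c%:M - 2 *: davenport B) =
    ('X - c%:P) ^+ 4 - (8 * \tr (B^T *m B))%:P * ('X - c%:P) ^+ 2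
    + (64 * \det B)%:P * ('X - c%:P)
    + (16 * (\tr (B^T *m B) ^+ 2 - 4 * principal_minors2 (B^T *m B)))%:P.
Proof.
have entry i j : char_poly_mx (c%:M - 2 *: davenport B) i j =
    'X *+ (i == j) - (c *+ (i == j) - 2 * davenport_entry B i j)%:P.
  by rewrite !mxE.
rewrite /char_poly det_mx44 /det4 /det3 /= !entry !inordK // !inord_eqE //=.
rewrite /principal_minors2 /mxtrace det_mx33 /det3 /= !(sum_ord3, mxE) //=.
ring.
Qed.

End Davenport.

Section RotationCost.
Variable R : realType.

Lemma sqnorm_quatR (w : 'cV[R]_4) (x : 'cV[R]_3) :
  sqnorm (quatR w *m x) = sqnorm w ^+ 2 * sqnorm x.
Proof. by rewrite /sqnorm !(sum_ord3, sum_ord4, mxE) !inordK //=; ring. Qed.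

Lemma rotation_error_sphere (R0 : 'M[R]_3) x w :
  R0^T *m R0 = 1%:M -> sqnorm w = 1 ->
  sqnorm (R0 *m x - quatR w *m x) =
    2 * sqnorm x - 2 * \tr ((R0 *m (x *m x^T))^T *m quatR w).
Proof.
move=> oR0 w1; rewrite sqnormB sqnorm_quatR w1 expr1n mul1r sqnorm_orthomx //.
by rewrite [R0 *m (x *m _)]mulmxA mxtrace_outer mulmxA; ring.
Qed.

Definition cost_mx (R0 S : 'M[R]_3) : 'M[R]_4 :=
  (2 * \tr S)%:M - 2 *: davenport (R0 *m S).

Lemma cost_mx_sym R0 S : (cost_mx R0 S)^T = cost_mx R0 S.
Proof. by rewrite /cost_mx raddfB /= linearZ /= tr_scalar_mx davenport_sym. Qed.

Lemma qform_cost_mx R0 S w : qform (cost_mx R0 S) w =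
  2 * \tr S * sqnorm w - 2 * \tr ((R0 *m S)^T *m quatR w).
Proof. by rewrite qformB qform_scalar qformZ qform_davenport. Qed.

Lemma sum_rotation_error l R0 (x : 'I_l -> 'cV[R]_3) (P : 'I_l -> 'M[R]_4) :
  R0^T *m R0 = 1%:M -> (forall i, (P i)^T = P i) ->
  (forall i w, sqnorm w = 1 -> qform (P i) w = sqnorm (R0 *m x i - quatR w *m x i)) ->
  \sum_(i < l) P i = cost_mx R0 (\sum_(i < l) x i *m (x i)^T).
Proof.
move=> oR0 symP Pq; apply: sym_qform_sphere_inj (cost_mx_sym _ _) _.
  by rewrite raddf_sum; apply: eq_bigr => i _; exact: symP.
move=> w w1; rewrite qform_sum qform_cost_mx w1 mulr1.
under eq_bigr do rewrite Pq // rotation_error_sphere //.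
rewrite sumrB -!mulr_sumr mxtrace_sum_outer; congr (2 * _ - 2 * _).
by rewrite mulmx_sumr raddf_sum mulmx_suml raddf_sum.
Qed.

End RotationCost.

Lemma char_poly_similar (F : fieldType) n (P A : 'M[F]_n) : P \in unitmx ->
  char_poly (invmx P *m A *m P) = char_poly A.
Proof.
move=> Pu; rewrite /char_poly /char_poly_mx.
set phi := map_mx (@polyC F).
have -> : 'X%:M - phi (invmx P *m A *m P) = phi (invmx P) *m ('X%:M - phi A) *m phi P.
  rewrite mulmxBr mulmxBl /phi !map_mxM; congr (_ - _).
  by rewrite scalar_mxC -mulmxA -map_mxM mulVmx // map_mx1 mulmx1.
by rewrite !det_mulmx mulrC mulrA -det_mulmx -map_mxM mulmxV // map_mx1 det1 mul1r.
Qed.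

Section Spectrum.
Variable R : realType.

(* Spectral theorem for S seen as a Hermitian matrix over R[i]. *)
Lemma sym_char_poly_split n (S : 'M[R]_n) : S^T = S ->
  exists r : seq R, char_poly S = \prod_(z <- r) ('X - z%:P).
Proof.
move=> symS; pose f := real_complex R; pose A := map_mx f S.
have Asym : A \is symmetricmx.
  by apply/is_hermitianmxP; rewrite expr0 scale1r map_mx_id // /A map_trmx symS.
have Areal : A \is a realmx by apply/mxOverP => i j; rewrite /A mxE /f complex_real.
have Aherm := realsym_hermsym Asym Areal.
have /orthomx_spectralP Aeq := hermitian_normalmx Aherm.
have dreal := hermitian_spectral_diag_real Aherm.
set d := spectral_diag A in Aeq dreal.
exists [seq complex.Re (d 0 i) | i <- enum 'I_n]; apply: (@map_poly_inj _ _ f).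
rewrite map_char_poly -/A Aeq char_poly_similar ?spectral_unit //.
rewrite char_poly_trig ?diag_mx_is_trig // rmorph_prod big_map big_enum /=.
apply: eq_bigr => i _; rewrite map_polyXsubC mxE eqxx mulr1n /f.
by congr (_ - _%:P); exact/esym/(RRe_real (mxOverP dreal 0 i)).
Qed.

Lemma sym3_sorted_eigen (S : 'M[R]_3) : S^T = S -> exists a b c,
  [/\ a <= b, b <= c & char_poly S = \prod_(z <- [:: a; b; c]) ('X - z%:P)].
Proof.
move=> /sym_char_poly_split [r charS].
have : size (sort <=%R r) = 3%N.
  by rewrite size_sort; have := size_char_poly S; rewrite charS size_prod_XsubC => -[].
have := sort_sorted (@le_total _ R) r; have := perm_sort <=%R r.
case: (sort <=%R r) => [|a [|b [|c [|? ?]]]] //= /permPl r_perm /and3P [le_ab le_bc _] _.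
by exists a, b, c; split => //; rewrite charS -(perm_big _ r_perm).
Qed.

Lemma eigvalsE n (A : 'M[R]_n) s : char_poly A = \prod_(a <- s) ('X - a%:P) ->
  eigvals A = sort <=%R s.
Proof.
move=> charA; rewrite /eigvals; case: pselect => [h|]; last first.
  by case; exists s; rewrite /eigseq charA.
have /eqP := xchooseP h; move: (xchoose h) => s'.
rewrite charA => /esym/prod_XsubC_eq s_perm.
by apply/perm_sortP => //; [exact: le_total | exact: le_trans | exact: le_anti].
Qed.

Lemma eigen_ge0_psd n (A : 'M[R]_n) a :
  (forall v : 'rV_n, 0 <= (v *m A *m v^T) 0 0) -> root (char_poly A) a -> 0 <= a.
Proof.
move=> psdA; rewrite -eigenvalue_root_char => /eigenvalueP [v vA v_neq0].
have vAv : (v *m A *m v^T) 0 0 = a * sqnorm v^T by rewrite vA -scalemxAl mxE sqnormE trmxK.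
have v_gt0 : 0 < sqnorm v^T.
  rewrite lt_def sumr_ge0 ?andbT => [|i _]; last exact: sqr_ge0.
  apply: contra v_neq0 => /eqP v0; apply/eqP/rowP => k.
  by have /eqP := psumr_eq0P (fun i _ => sqr_ge0 _) v0 (i := k) isT; rewrite !mxE sqrf_eq0 => /eqP.
by rewrite -(pmulr_lge0 _ v_gt0) -vAv.
Qed.

Lemma outer_sum_psd l n (x : 'I_l -> 'cV[R]_n) (v : 'rV[R]_n) :
  0 <= (v *m (\sum_(i < l) x i *m (x i)^T) *m v^T) 0 0.
Proof.
rewrite mulmx_sumr mulmx_suml summxE; apply: sumr_ge0 => i _.
by rewrite mulmxA -mulmxA -trmx_mul mxE big_ord1 [_^T _ _]mxE -expr2 sqr_ge0.
Qed.

End Spectrum.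

Lemma char_poly_cost_mx (R : realType) (R0 S : 'M[R]_3) a b c :
  is_SO3 R0 -> S^T = S -> char_poly S = \prod_(z <- [:: a; b; c]) ('X - z%:P) ->
  char_poly (cost_mx R0 S) =
    \prod_(z <- [:: 0; 4 * (a + b); 4 * (a + c); 4 * (b + c)]) ('X - z%:P).
Proof.
move=> [oR0 detR0] symS /vieta3 [trS pmS detS].
have BtB : (R0 *m S)^T *m (R0 *m S) = S *m S.
  by rewrite trmx_mul -mulmxA (mulmxA R0^T) oR0 mul1mx symS.
rewrite char_poly_davenport BtB mxtrace_sqr3 principal_minors2_sqr det_mulmx detR0.
by rewrite mul1r trS pmS detS !big_cons big_nil; ring.
Qed.

Unset Implicit Arguments.

Theorem lemma4p5 (R : realType) (R0 : 'M[R]_3) (l : nat)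
    (x : 'I_l -> 'cV[R]_3) (P : 'I_l -> 'M[R]_4) :
  is_SO3 R0 ->
  (forall i, (P i)^T = P i) ->
  (forall i (w : 'cV[R]_4), sqnorm w = 1 ->
     qform (P i) w = sqnorm (R0 *m x i - quatR w *m x i)) ->
  lambda_min2 (\sum_(i < l) P i) =
    \sum_(i < l) 4 * sqnorm (x i)
    - lambda_max (\sum_(i < l) (4 : R) *: (x i *m (x i)^T)).
Proof.
move=> SO3_R0 symP Pq; set S := \sum_(i < l) x i *m (x i)^T.
have symS : S^T = S by rewrite raddf_sum; apply: eq_bigr => i _; rewrite /= trmx_mul trmxK.
have [a [b [c [le_ab le_bc charS]]]] := sym3_sorted_eigen symS.
have a_ge0 : 0 <= a.
  by apply: (eigen_ge0_psd (outer_sum_psd x)); rewrite charS root_prod_XsubC mem_head.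
have [trS _ _] := vieta3 charS.
rewrite (sum_rotation_error SO3_R0.1 symP Pq) -/S -scaler_sumr /lambda_min2 /lambda_max.
rewrite (eigvalsE (char_poly_cost_mx SO3_R0 symS charS)) (eigvalsE (char_poly3_scale 4 charS)).
have sorted_cost : sorted <=%R [:: 0; 4 * (a + b); 4 * (a + c); 4 * (b + c)].
  by rewrite /= !andbT; apply/and3P; split; lra.
have sorted_S : sorted <=%R [:: 4 * a; 4 * b; 4 * c].
  by rewrite /= !andbT; apply/andP; split; lra.
rewrite !(sorted_sort le_trans) //= -mulr_sumr -mxtrace_sum_outer -/S trS; ring.
Qed.
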